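(* Let $m$ be even, $N,n\ge1$ integers and $0<\varepsilon\le1$. Fix $x,y\in[m]^N$. For any two sequences $z,\bar z\in[m]^n$ such that both $(x,y,z)$ and $(x,y,\bar z)$ belong to the event $B$ (i.e., no symbol appears more than once in the third sequence, and no symbol of the third sequence appears in $x$ or in $y$), we have $$\frac{1}{|K_m|}\sum_{\omega\in K_m}\Pr_{(u,q^\omega,u)}(x,y,z)=\frac{1}{|K_m|}\sum_{\omega\in K_m}\Pr_{(u,q^\omega,u)}(x,y,\bar z),$$ $$\frac{1}{|K_m|}\sum_{\omega\in K_m}\Pr_{(u,q^\omega,q^\omega)}(x,y,z)=\frac{1}{|K_m|}\sum_{\omega\in K_m}\Pr_{(u,q^\omega,q^\omega)}(x,y,\bar z).$$
   Context: Let $u$ be the uniform distribution on $[m]=\{1,\dots,m\}$. Let $K_m$ be the collection of all subsets of $[m]$ of cardinality $m/2$. For $\omega\in K_m$ let $q^\omega$ be the distribution on $[m]$ with $q^\omega_j=(1+\varepsilon)/m$ for $j\in\omega$ and $q^\omega_j=(1-\varepsilon)/m$ for $j\notin\omega$. For distributions $a,b,c$ on $[m]$, $\Pr_{(a,b,c)}(x,y,z)=\prod_{i=1}^N a_{x_i}\prod_{i=1}^N b_{y_i}\prod_{i=1}^n c_{z_i}$ is the probability that $(X,Y,Z)=(x,y,z)$ when $X$ ($N$ symbols) is i.i.d. $a$, $Y$ ($N$ symbols) is i.i.d. $b$, $Z$ ($n$ symbols) is i.i.d. $c$, all independent. *)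

From mathcomp Require Import all_boot all_order all_algebra.
Set Implicit Arguments. Unset Strict Implicit. Unset Printing Implicit Defensive.
Import Order.TTheory GRing.Theory Num.Theory.
Local Open Scope ring_scope.

(* [m] is modelled by 'I_m (elements 0..m-1 instead of 1..m). *)

Definition unif {R : realFieldType} (m : nat) : 'I_m -> R := fun _ => 1 / m%:R.

Definition Km (m : nat) : {set {set 'I_m}} := [set w : {set 'I_m} | #|w| == m./2].

Definition qw {R : realFieldType} (m : nat) (eps : R) (w : {set 'I_m}) : 'I_m -> R :=
  fun j => if j \in w then (1 + eps) / m%:R else (1 - eps) / m%:R.

Definition Pr3 {R : realFieldType} (m N n : nat) (a b c : 'I_m -> R)
  (x y : N.-tuple 'I_m) (z : n.-tuple 'I_m) : R :=
  (\prod_(i < N) a (tnth x i)) * (\prod_(i < N) b (tnth y i)) * (\prod_(i < n) c (tnth z i)).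

Definition eventB (m N n : nat) (x y : N.-tuple 'I_m) (z : n.-tuple 'I_m) : bool :=
  uniq z && all (fun s => (s \notin x) && (s \notin y)) z.
Arguments unif {R} m _.

From mathcomp Require Import all_boot all_order all_algebra all_fingroup.
Import Order.TTheory GRing.Theory Num.Theory.
Local Open Scope ring_scope.

Set Implicit Arguments.
Unset Strict Implicit.

(* When the third distribution is uniform, Pr3 does not depend on the third
   sequence at all.  For the second identity, event B for z and zb yields a permutation of
   the alphabet fixing every symbol of x and y and sending z to zb; relabelling
   omega by this permutation preserves K_m, leaves the factors of x and y
   unchanged and turns the factors of z into those of zb. *)

Lemma exists_perm_map_fixing (T : finType) (s t : seq T) (C : {set T}) :
  uniq s -> uniq t -> size s = size t ->
  all (fun a => a \notin C) s -> all (fun a => a \notin C) t ->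
  exists sg : {perm T}, map sg s = t /\ {in C, forall c, sg c = c}.
Proof.
elim: t s C => [|b t IH] [|a s] C //=.
  by move=> *; exists 1%g; split => // c _; rewrite perm1.
move=> /andP[aS us] /andP[bt ut] [hs] /andP[aC sC] /andP[bC tC].
pose tau := tperm a b.
(* Add b to the fixed set so that the rest of the construction cannot move it. *)
have tau_s_notin : all (fun i => i \notin b |: C) (map tau s).
  apply/allP => _ /mapP[i iS ->]; rewrite in_setU1 negb_or.
  have iC : i \notin C by apply: (allP sC).
  apply/andP; split; last by rewrite /tau; case: tpermP => *.
  by rewrite -{1}(tpermL a b) (inj_eq perm_inj); apply: contraNneq aS => <-.
have t_notin : all (fun i => i \notin b |: C) t.
  apply/allP => j jt; rewrite in_setU1 negb_or (allP tC) // andbT.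
  by apply: contraNneq bt => <-.
have [||sg' [map_sg' fix_sg']] := IH (map tau s) (b |: C) _ ut _ tau_s_notin t_notin.
- by rewrite map_inj_uniq //; apply: perm_inj.
- by rewrite size_map.
exists (tau * sg')%g; split.
  rewrite permM tpermL fix_sg' ?setU11 // -map_sg' -map_comp.
  by congr (_ :: _); apply: eq_map => i; rewrite /= permM.
move=> c cC; rewrite permM tpermD ?fix_sg' ?in_setU1 ?cC ?orbT //.
  by apply: contraNneq aC => ->.
by apply: contraNneq bC => ->.
Qed.

Lemma eventB_perm (m N n : nat) (x y : N.-tuple 'I_m) (z zb : n.-tuple 'I_m) :
  eventB x y z -> eventB x y zb ->
  exists sg : {perm 'I_m},
    (forall i, tnth zb i = sg (tnth z i)) /\ (forall i, sg (tnth y i) = tnth y i).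
Proof.
move=> /andP[uz z_out] /andP[uzb zb_out].
pose C := [set c | (c \in x) || (c \in y)].
have notin_C s : all (fun c => (c \notin x) && (c \notin y)) s ->
    all (fun c => c \notin C) s.
  by move=> s_out; apply/allP => c /(allP s_out); rewrite inE negb_or.
have [|sg [map_sg fix_sg]] := exists_perm_map_fixing uz uzb _ (notin_C _ z_out)
  (notin_C _ zb_out); first by rewrite !size_tuple.
exists sg; split=> i; last by apply: fix_sg; rewrite inE mem_tnth orbT.
rewrite (tnth_nth (tnth z i)) -map_sg (nth_map (tnth z i)) ?size_tuple //.
by rewrite -tnth_nth.
Qed.

Lemma qw_imset_perm (R : realFieldType) (m : nat) (eps : R) (sg : {perm 'I_m})
  (w : {set 'I_m}) (j : 'I_m) : qw eps (sg @: w) (sg j) = qw eps w j.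
Proof. by rewrite /qw mem_imset //; apply: perm_inj. Qed.

Lemma sum_Km_imset_perm (R : realFieldType) (m : nat) (sg : {perm 'I_m})
  (F : {set 'I_m} -> R) :
  \sum_(w in Km m) F w = \sum_(w in Km m) F (sg @: w).
Proof.
rewrite (reindex_inj (imset_inj (@perm_inj _ sg))).
by apply: eq_bigl => w; rewrite !inE card_imset //; apply: perm_inj.
Qed.

Lemma Pr3_unif_third (R : realFieldType) (m N n : nat) (a b : 'I_m -> R)
  (x y : N.-tuple 'I_m) (z zb : n.-tuple 'I_m) :
  Pr3 a b (unif m) x y z = Pr3 a b (unif m) x y zb.
Proof. by rewrite /Pr3 /unif. Qed.

Lemma Pr3_qw_perm (R : realFieldType) (m N n : nat) (eps : R) (a : 'I_m -> R)
  (sg : {perm 'I_m}) (w : {set 'I_m}) (x y : N.-tuple 'I_m) (z zb : n.-tuple 'I_m) :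
  (forall i, tnth zb i = sg (tnth z i)) -> (forall i, sg (tnth y i) = tnth y i) ->
  Pr3 a (qw eps (sg @: w)) (qw eps (sg @: w)) x y zb = Pr3 a (qw eps w) (qw eps w) x y z.
Proof.
move=> zb_sg y_fixed; rewrite /Pr3; congr (_ * _ * _).
  by apply: eq_bigr => i _; rewrite -[in LHS]y_fixed qw_imset_perm.
by apply: eq_bigr => i _; rewrite zb_sg qw_imset_perm.
Qed.

Theorem lemma3 (R : realFieldType) (m N n : nat) (eps : R) :
  ~~ odd m -> (1 <= N)%N -> (1 <= n)%N -> 0 < eps -> eps <= 1 ->
  forall (x y : N.-tuple 'I_m) (z zb : n.-tuple 'I_m),
  eventB x y z -> eventB x y zb ->
  (#|Km m|%:R^-1 * \sum_(w in Km m) Pr3 (unif m) (qw eps w) (unif m) x y z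
   = #|Km m|%:R^-1 * \sum_(w in Km m) Pr3 (unif m) (qw eps w) (unif m) x y zb)
  /\
  (#|Km m|%:R^-1 * \sum_(w in Km m) Pr3 (unif m) (qw eps w) (qw eps w) x y z
   = #|Km m|%:R^-1 * \sum_(w in Km m) Pr3 (unif m) (qw eps w) (qw eps w) x y zb).
Proof.
move=> _ _ _ _ _ x y z zb Bz Bzb; split.
  by congr (_ * _); apply: eq_bigr => w _; apply: Pr3_unif_third.
have [sg [zb_sg y_fixed]] := eventB_perm Bz Bzb.
congr (_ * _); rewrite [RHS](sum_Km_imset_perm sg).
by apply: eq_bigr => w _; rewrite (Pr3_qw_perm _ _ _ _ zb_sg y_fixed).
Qed.
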